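(* Let $(L,T,U,\bar e)$ be a feasible basis structure of an instance of the budget-constrained minimum cost flow problem and let $x$ be its basic feasible flow (the basic solution with respect to the budget $B$). Then $x$ can be decomposed as $x = x^I + x^C$, where $x^I\in\mathbb{Z}^E$ is integral and $x^C$ is non-zero (and possibly fractional) only on the edges of the cycle $C(\bar e)$.
   Context: Budget-constrained minimum cost flow problem: given a directed multigraph $G=(V,E)$ with capacities $u_e\in\mathbb{N}_{\ge 0}$, costs $c_e\in\mathbb{Z}$, usage fees $b_e\in\mathbb{N}_{\ge 0}$ for $e\in E$, and a budget $B\in\mathbb{N}_{\ge0}$. A feasible flow is a vector $x\in\mathbb{R}^E$ with $\sum_{e\in\delta^-(v)}x_e=\sum_{e\in\delta^+(v)}x_e$ for all $v\in V$ ($\delta^+(v)$, $\delta^-(v)$ the outgoing/incoming edges) and $0\le x_e\le u_e$; write $c(x)=\sum_e c_ex_e$, $b(x)=\sum_e b_ex_e$. The goal is to minimize $c(x)$ over feasible flows with $b(x)\le B$. A basis structure is a tuple $(L,T,U,\bar e)$ with $\bar e\in E$, $L,T,U$ a partition of $E\setminus\{\bar e\}$, and $T$ a spanning tree of the underlying undirected graph of $G$. For $f\in E\setminus T$, $C(f)$ is the unique (undirected) cycle in $T\cup\{f\}$; $C^+(f)$ ($C^-(f)$) are its edges oriented in the same (opposite) direction as $f$ along the cycle, and $b(C(f))=\sum_{g\in C^+(f)}b_g-\sum_{g\in C^-(f)}b_g$. It is required that $b(C(\bar e))\neq 0$. The basic solution of $(L,T,U,\bar e)$ is the unique vector $x$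 satisfying flow conservation at every node, $x_e=0$ for $e\in L$, $x_e=u_e$ for $e\in U$, and $b(x)=B$. The basis structure is feasible if this $x$ satisfies $0\le x\le u$; $x$ is then called its basic feasible flow. *)

From mathcomp Require Import all_boot all_order all_algebra.
Set Implicit Arguments. Unset Strict Implicit. Unset Printing Implicit Defensive.
Import Order.TTheory GRing.Theory Num.Theory.

(* An undirected walk is a sequence of (edge, direction) pairs; (g, true)
   traverses g from src g to tgt g, (g, false) from tgt g to src g. *)
Local Open Scope ring_scope.
Section Graph.
Variables (V E : finType) (src tgt : E -> V).

Definition step_from (gd : E * bool) : V := if gd.2 then src gd.1 else tgt gd.1.
Definition step_to (gd : E * bool) : V := if gd.2 then tgt gd.1 else src gd.1.

Fixpoint uwalk (v w : V) (p : seq (E * bool)) : bool :=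
  match p with
  | [::] => v == w
  | gd :: p' => (step_from gd == v) && uwalk (step_to gd) w p'
  end.

Definition uverts (v : V) (p : seq (E * bool)) : seq V := v :: map step_to p.

Definition tree_path (T : {set E}) (v w : V) (p : seq (E * bool)) : bool :=
  [&& uwalk v w p, all (fun gd => gd.1 \in T) p & uniq (uverts v p)].

Definition spanning_tree (T : {set E}) : Prop :=
  (forall v w : V, exists p, uwalk v w p && all (fun gd => gd.1 \in T) p)
  /\ #|T| = #|V|.-1.

(* Fundamental cycle C(f) of f w.r.t. T: the edge f followed by the (unique)
   simple path p in T from tgt f back to src f.  C^+(f) = f and the edges
   traversed forward in p; C^-(f) = edges traversed backward in p. *)
Definition fund_cycle_path (T : {set E}) (f : E) (p : seq (E * bool)) : bool :=
  tree_path T (tgt f) (src f) p.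

Definition in_cycle (f : E) (p : seq (E * bool)) (g : E) : bool :=
  (g == f) || (g \in map fst p).

Definition b_cycle (b : E -> nat) (f : E) (p : seq (E * bool)) : int :=
  (b f)%:Z + \sum_(gd <- p) (if gd.2 then (b gd.1)%:Z else - (b gd.1)%:Z).

Definition basis_structure (L T U : {set E}) (ebar : E) (b : E -> nat) : Prop :=
  [/\ [&& [disjoint L & T], [disjoint L & U] & [disjoint T & U]],
      L :|: T :|: U = [set~ ebar],
      spanning_tree T &
      forall p, fund_cycle_path T ebar p -> b_cycle b ebar p != 0].

Definition basic_solution (R : numDomainType) (L U : {set E}) (u b : E -> nat)
  (B : nat) (x : E -> R) : Prop :=
  [/\ forall v : V, \sum_(e | tgt e == v) x e = \sum_(e | src e == v) x e,
      forall e, e \in L -> x e = 0,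
      forall e, e \in U -> x e = (u e)%:R &
      \sum_e (b e)%:R * x e = B%:R :> R].

Definition feasible_flow_bounds (R : numDomainType) (u : E -> nat) (x : E -> R) :=
  forall e, 0 <= x e <= (u e)%:R.

End Graph.

From Pilot Require Import Defs.
From mathcomp Require Import all_boot all_order all_algebra.
From mathcomp Require Import zify.
From Stdlib Require Import ClassicalEpsilon.
Import Order.TTheory GRing.Theory Num.Theory.
Local Open Scope ring_scope.
Set Implicit Arguments. Unset Strict Implicit.

(* Let p be the tree path closing C(ebar) and chi the signed incidence vector
   of C(ebar).  Then w := x - x_ebar * chi is a circulation which vanishes on
   ebar and on L, and equals the capacity on U; so w is integral off T.  For a
   tree edge t, removing t splits the tree into two components, and testing the
   circulation w against the indicator of one component expresses w_t as an
   integer combination of the values of w on non-tree edges.  Hence w is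
   integral, and x = w + x_ebar * chi is the required decomposition. *)

Section UndirectedReachability.
Variables (V E : finType) (src tgt : E -> V).
Local Notation uwalk := (uwalk src tgt).
Local Notation step_from := (step_from src tgt).
Local Notation step_to := (step_to src tgt).
Local Notation uverts := (uverts src tgt).
Local Notation tree_path := (tree_path src tgt).

Definition ureach (F : {set E}) (v w : V) : Prop :=
  exists p, uwalk v w p && all (fun gd => gd.1 \in F) p.

Lemma uwalk_cat u v w p q : uwalk u v p -> uwalk v w q -> uwalk u w (p ++ q).
Proof.
elim: p u => [|gd p IHp] u /=; first by move/eqP->.
by move=> /andP[-> walk_p] walk_q; rewrite (IHp _ walk_p walk_q).
Qed.

Lemma ureach_refl (F : {set E}) v : ureach F v v.
Proof. by exists [::]; rewrite /= eqxx. Qed.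

Lemma ureach_trans (F : {set E}) u v w :
  ureach F u v -> ureach F v w -> ureach F u w.
Proof.
move=> [p /andP[walk_p Fp]] [q /andP[walk_q Fq]]; exists (p ++ q).
by rewrite (uwalk_cat walk_p walk_q) all_cat Fp Fq.
Qed.

Lemma ureach_step (F : {set E}) (gd : E * bool) :
  gd.1 \in F -> ureach F (step_from gd) (step_to gd).
Proof. by move=> Fgd; exists [:: gd]; rewrite /= !eqxx Fgd. Qed.

Lemma ureach_setD1 (F : {set E}) e v w : ureach F v w ->
  ureach (F :\ e) v w \/
  ((ureach (F :\ e) v (src e) \/ ureach (F :\ e) v (tgt e)) /\
   (ureach (F :\ e) (src e) w \/ ureach (F :\ e) (tgt e) w)).
Proof.
case=> p; elim: p v => [|gd p IHp] v /=.
  by move=> /andP[/eqP-> _]; left; exact: ureach_refl.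
move=> /andP[/andP[/eqP gd_v walk_p] /andP[F_gd Fp]].
have {IHp} := IHp (step_to gd); rewrite walk_p Fp => /(_ isT) IHp.
case: (eqVneq gd.1 e) => [gd_e|gd_ne].
  right; split.
    by move: gd_v; rewrite /Defs.step_from gd_e; case: gd.2 => <-;
      [left|right]; exact: ureach_refl.
  case: IHp => [reach_w|[_ reach_w]] //.
  by move: reach_w; rewrite /Defs.step_to gd_e; case: gd.2; [right|left].
have reach_gd : ureach (F :\ e) v (step_to gd).
  by rewrite -gd_v; apply: ureach_step; rewrite !inE gd_ne F_gd.
case: IHp => [reach_w|[[reach_e|reach_e] reach_w]].
- by left; exact: ureach_trans reach_gd reach_w.
- by right; split=> //; left; exact: ureach_trans reach_gd reach_e.
- by right; split=> //; right; exact: ureach_trans reach_gd reach_e.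
Qed.

(* Removing an edge from F adds at most one root. *)
Lemma card_ureach_roots (F : {set E}) (S : {set V}) :
  (forall v, exists2 r, r \in S & ureach F r v) -> (#|V| <= #|F| + #|S|)%N.
Proof.
move cardF: #|F| => n; elim: n F S cardF => [|n IHn] F S cardF rootsS.
  have F0 : F = set0 by apply/eqP; rewrite -cards_eq0 cardF.
  rewrite add0n; apply/subset_leq_card/subsetP => v _.
  have [r Sr [[|gd p] /andP[walk_p Fp]]] := rootsS v; first by move/eqP: walk_p => <-.
  by move: Fp; rewrite /= F0 inE.
have [e Fe] : exists e, e \in F.
  by apply/set0Pn; rewrite -cards_eq0 cardF.
have cardFe : #|F :\ e| = n by move: cardF; rewrite (cardsD1 e) Fe; case.
have cardSU a : (#|a |: S| <= #|S| + 1)%N.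
  by rewrite cardsU1 addnC leq_add2l; case: (a \notin S).
have [[r0 Sr0 r0_src]|no_src] :=
  classic (exists2 r, r \in S & ureach (F :\ e) r (src e)).
  apply: leq_trans (IHn _ (tgt e |: S) cardFe _) _; first last.
    by move: (cardSU (tgt e)); lia.
  move=> v; have [r Sr reach_v] := rootsS v.
  case: (ureach_setD1 e reach_v) => [reach|[_ [reach|reach]]].
  - by exists r => //; rewrite inE Sr orbT.
  - by exists r0; [rewrite inE Sr0 orbT | exact: ureach_trans r0_src reach].
  - by exists (tgt e); first exact: setU11.
apply: leq_trans (IHn _ (src e |: S) cardFe _) _; first last.
  by move: (cardSU (src e)); lia.
move=> v; have [r Sr reach_v] := rootsS v.
case: (ureach_setD1 e reach_v) => [reach|[[to_e|to_e] [reach|reach]]].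
- by exists r => //; rewrite inE Sr orbT.
- by case: no_src; exists r.
- by case: no_src; exists r.
- by exists (src e); first exact: setU11.
- by exists r; [rewrite inE Sr orbT | exact: ureach_trans to_e reach].
Qed.

Lemma spanning_tree_setD1 (T : {set E}) t : spanning_tree src tgt T -> t \in T ->
  ~ ureach (T :\ t) (tgt t) (src t).
Proof.
move=> [connT cardT] Tt reach_t.
have : (#|V| <= #|T :\ t| + #|[set tgt t]|)%N.
  apply: card_ureach_roots => v; exists (tgt t); first by rewrite inE.
  case: (ureach_setD1 t (connT (tgt t) v)) => [|[_ [reach_v|]]] //.
  exact: ureach_trans reach_t reach_v.
rewrite cards1; move: cardT; rewrite (cardsD1 t) Tt.
have : (0 < #|V|)%N by apply/card_gt0P; exists (tgt t).
lia.
Qed.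

Lemma tree_path_suffix (F : {set E}) u v w q :
  tree_path F u w q -> v \in uverts u q -> exists q', tree_path F v w q'.
Proof.
elim: q u => [|gd q IHq] u; first by rewrite inE => path_u /eqP->; exists [::].
move=> path_u; rewrite inE => /orP[/eqP->|v_q]; first by exists (gd :: q).
case/and3P: path_u => /= /andP[_ walk_q] /andP[_ Fq] /andP[_ uniq_q].
by apply: (IHq (step_to gd)) => //; apply/and3P.
Qed.

Lemma ureach_tree_path (F : {set E}) v w : ureach F v w -> exists p, tree_path F v w p.
Proof.
case=> p; elim: p v => [|gd p IHp] v /=.
  by move=> /andP[walk_p _]; exists [::]; rewrite /Defs.tree_path /= walk_p.
move=> /andP[/andP[/eqP gd_v walk_p] /andP[F_gd Fp]].
have [q path_q] := IHp (step_to gd) (introT andP (conj walk_p Fp)).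
have [v_q|v_notq] := boolP (v \in uverts (step_to gd) q).
  exact: tree_path_suffix path_q v_q.
case/and3P: path_q => walk_q Fq uniq_q.
exists (gd :: q); apply/and3P; split; first by rewrite /= gd_v eqxx walk_q.
  by rewrite /= F_gd Fq.
by change (uniq (v :: uverts (step_to gd) q)); rewrite cons_uniq v_notq uniq_q.
Qed.

Lemma tree_path_notin (F : {set E}) v w p e :
  tree_path F v w p -> e \notin F -> e \notin map fst p.
Proof.
case/and3P=> _ Fp _ notFe; apply/mapP => -[gd p_gd e_gd].
by move/allP: Fp => /(_ gd p_gd); rewrite -e_gd (negbTE notFe).
Qed.

End UndirectedReachability.

Section Circulations.
Variables (R : pzRingType) (V E : finType) (src tgt : E -> V).
Local Notation uwalk := (uwalk src tgt).
Local Notation ureach := (ureach src tgt).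

(* Equivalent to flow conservation: take pi the indicator of a node. *)
Definition circulation (w : E -> R) : Prop :=
  forall pi : V -> R, \sum_e w e * (pi (tgt e) - pi (src e)) = 0.

Lemma sum_by_endpoint (h : E -> V) (w : E -> R) (pi : V -> R) :
  \sum_e w e * pi (h e) = \sum_v (\sum_(e | h e == v) w e) * pi v.
Proof.
rewrite (partition_big h xpredT) //; apply: eq_bigr => v _.
by rewrite mulr_suml; apply: eq_bigr => e /eqP->.
Qed.

Lemma conservation_circulation (w : E -> R) :
  (forall v, \sum_(e | tgt e == v) w e = \sum_(e | src e == v) w e) ->
  circulation w.
Proof.
move=> conserv pi; under eq_bigr do rewrite mulrBr.
rewrite sumrB !sum_by_endpoint.
by under eq_bigr do rewrite conserv; rewrite subrr.
Qed.

Lemma circulationB (w1 w2 : E -> R) :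
  circulation w1 -> circulation w2 -> circulation (fun e => w1 e - w2 e).
Proof.
move=> circ1 circ2 pi; under eq_bigr do rewrite mulrBl.
by rewrite sumrB circ1 circ2 subrr.
Qed.

Lemma circulationZ (a : R) (w : E -> R) :
  circulation w -> circulation (fun e => a * w e).
Proof.
move=> circ pi; under eq_bigr do rewrite -mulrA.
by rewrite -mulr_sumr circ mulr0.
Qed.

Definition walk_sign (gd : E * bool) : R := if gd.2 then 1 else -1.

Lemma uwalk_potential_sum (pi : V -> R) u v p : uwalk u v p ->
  \sum_(gd <- p) walk_sign gd * (pi (tgt gd.1) - pi (src gd.1)) = pi v - pi u.
Proof.
elim: p u => [|gd p IHp] u /=; first by move/eqP->; rewrite big_nil subrr.
move=> /andP[/eqP <- walk_p]; rewrite big_cons (IHp _ walk_p).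
rewrite /walk_sign /Defs.step_to /Defs.step_from; case: gd.2.
  by rewrite mul1r addrC addrA subrK.
by rewrite mulN1r opprB addrC addrA subrK.
Qed.

(* The signed incidence vector of the cycle formed by f and a walk p from
   tgt f back to src f. *)
Definition cycle_flow (f : E) (p : seq (E * bool)) (e : E) : R :=
  (e == f)%:R + \sum_(gd <- p | gd.1 == e) walk_sign gd.

Lemma cycle_flow_circulation f p :
  uwalk (tgt f) (src f) p -> circulation (cycle_flow f p).
Proof.
move=> walk_p pi; under eq_bigr do rewrite mulrDl mulr_suml.
rewrite big_split /= (exchange_big_dep xpredT) //=.
under eq_bigr do rewrite mulr_natl mulrb.
rewrite -big_mkcond big_pred1_eq.
under [X in _ + X]eq_bigr => gd _.
  rewrite (eq_bigl (pred1 gd.1)); last by move=> e; rewrite /= eq_sym.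
  rewrite big_pred1_eq; over.
by rewrite /= (uwalk_potential_sum pi walk_p) addrA subrK subrr.
Qed.

Lemma cycle_flow_off_path f p e :
  e \notin map fst p -> cycle_flow f p e = (e == f)%:R.
Proof.
move=> e_notp; rewrite /cycle_flow big1_seq ?addr0 // => gd /andP[/eqP gd_e p_gd].
by case/negP: e_notp; rewrite -gd_e; exact: map_f.
Qed.

Lemma spanning_tree_cut_intr (T : {set E}) (w : E -> R) (z : E -> int) t :
  spanning_tree src tgt T -> t \in T -> circulation w ->
  (forall e, e \notin T -> w e = (z e)%:~R) -> exists k : int, w t = k%:~R.
Proof.
move=> treeT Tt circ_w w_off.
pose side v : int :=
  if excluded_middle_informative (ureach (T :\ t) (tgt t) v) then 1 else 0.
pose jump e : int := side (tgt e) - side (src e).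
have jump_t : jump t = 1.
  rewrite /jump /side; case: excluded_middle_informative => [?|[]]; last first.
    exact: ureach_refl.
  case: excluded_middle_informative => [reach_src|?]; last by rewrite subr0.
  by case: (spanning_tree_setD1 treeT Tt reach_src).
have jump_tree e : e \in T -> e != t -> jump e = 0.
  move=> Te e_ne_t; have Tte : e \in T :\ t by rewrite !inE e_ne_t Te.
  have fwd := @ureach_step _ _ src tgt _ (e, true) Tte.
  have bwd := @ureach_step _ _ src tgt _ (e, false) Tte.
  rewrite /jump /side.
  case: excluded_middle_informative => reach_tgt;
    case: excluded_middle_informative => reach_src; rewrite ?subrr //.
  - by case: reach_src; exact: ureach_trans reach_tgt bwd.
  - by case: reach_tgt; exact: ureach_trans reach_src fwd.
exists (- \sum_(e | e \notin T) z e * jump e).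
have := circ_w (fun v => (side v)%:~R).
under eq_bigr => e _ do rewrite -intrB -/(jump e).
rewrite (bigD1 t) //= jump_t mulr1 => /eqP; rewrite addr_eq0 => /eqP->.
rewrite intrN rmorph_sum /=; congr (- _).
rewrite big_mkcond [RHS]big_mkcond /=; apply: eq_bigr => e _.
have [Te|notTe] := boolP (e \in T).
  by case: eqP => // /eqP e_ne_t; rewrite jump_tree // mulr0.
have -> : e != t by apply: contraNneq notTe => ->.
by rewrite /= intrM w_off.
Qed.

End Circulations.

Theorem corollary1 (R : realFieldType) (V E : finType) (src tgt : E -> V)
  (u : E -> nat) (c : E -> int) (b : E -> nat) (B : nat)
  (L T U : {set E}) (ebar : E) (x : E -> R) :
  basis_structure src tgt L T U ebar b ->
  basic_solution src tgt L U u b B x ->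
  feasible_flow_bounds u x ->
  exists (xI : E -> int) (xC : E -> R),
    (forall e, x e = (xI e)%:~R + xC e) /\
    exists p, fund_cycle_path src tgt T ebar p /\
      forall e, ~~ in_cycle ebar p e -> xC e = 0.
Proof.
move=> [_ partition treeT _] [conserv x_L x_U _] _.
have [p path_p] := ureach_tree_path (treeT.1 (tgt ebar) (src ebar)).
have split_E e : [|| e \in L, e \in T | e \in U] = (e != ebar).
  by rewrite -!in_setU setUA partition !inE.
pose xC e := x ebar * cycle_flow R ebar p e.
pose z e : int := if e \in U then (u e)%:Z else 0.
have xI_off e : e \notin T -> x e - xC e = (z e)%:~R.
  move=> notTe; rewrite /xC /z cycle_flow_off_path; last first.
    exact: tree_path_notin path_p notTe.
  have [Ue|notUe] := boolP (e \in U).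
    by move: (split_E e); rewrite Ue !orbT => /esym/negPf ->; rewrite mulr0 subr0 x_U.
  have [->|e_ne] := eqVneq e ebar; first by rewrite mulr1 subrr.
  have Le : e \in L.
    by move: (split_E e); rewrite (negbTE notTe) (negbTE notUe) !orbF e_ne.
  by rewrite x_L // mulrb mulr0 subrr.
have circ : circulation src tgt (fun e => x e - xC e).
  apply: circulationB; first exact: conservation_circulation.
  by apply: circulationZ; apply: cycle_flow_circulation; case/and3P: path_p.
have /fin_all_exists [xI xI_def] : forall e, exists k : int, x e - xC e = k%:~R.
  move=> e; have [Te|notTe] := boolP (e \in T); last by exists (z e); exact: xI_off.
  exact: spanning_tree_cut_intr treeT Te circ xI_off.
exists xI, xC; split=> [e|]; first by rewrite -xI_def subrK.
exists p; split=> // e; rewrite /in_cycle negb_or => /andP[e_ne e_notp].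
by rewrite /xC cycle_flow_off_path // (negbTE e_ne) mulr0.
Qed.
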